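(* Let $M^2$ be a minimal surface of general type in $\mathbb R^4$, parameterized by semi-canonical parameters $(u,v)$, and suppose $\gamma_1=0$ identically. Then $E=E(u)$ depends only on $u$; the invariants $\mu=\mu(u)$, $\nu=\nu(u)$, $\gamma_2=\gamma_2(u)$, $\beta_2=\beta_2(u)$ depend only on $u$; $\beta_1=0$; and $$\gamma_2=\frac{1}{4\sqrt E}\big(\ln|\mu^2-\nu^2|\big)_u,\qquad \beta_2=\frac{1}{\sqrt E}\Big(\ln\sqrt{\Big|\frac{\mu+\nu}{\mu-\nu}\Big|}\Big)_u .$$
   Context: $\mathbb R^4$ carries the standard metric $g=\langle\cdot,\cdot\rangle$ and flat connection $\nabla'$; everything is smooth and local. For a regular surface $M^2: z=z(u,v)$ let $E,F,G$ be the first fundamental form coefficients, $\sigma$ the second fundamental form, $K$ the Gauss curvature, and $\varkappa$ the curvature of the normal connection, $\varkappa=g(R^\perp(x,y)n_2,n_1)$ for a positively oriented orthonormal frame $(x,y,n_1,n_2)$ with $x,y$ tangent. Minimal means $\sigma(x,x)+\sigma(y,y)=0$ for orthonormal tangent $x,y$. A minimal surface is of general type if $K^2-\varkappa^2>0$ and $\varkappa\neq0$ everywhere. The ellipse of curvature at $p$ is $\{\sigma(v,v): v\in T_pM^2,\ |v|=1\}$; a tangent line is canonical if it is collinear with an axis of this ellipse. The geometric frame is a positively oriented orthonormal frame $\{x,y,n_1,n_2\}$ with $x,y$ canonical tangent fields and $n_1,n_2$ normal, satisfying $\nabla'_xx=\gamma_1y+\nu n_1$, $\nabla'_xy=-\gamma_1x+\mu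 n_2$, $\nabla'_yx=-\gamma_2y+\mu n_2$, $\nabla'_yy=\gamma_2x-\nu n_1$, $\nabla'_xn_1=-\nu x+\beta_1n_2$, $\nabla'_yn_1=\nu y+\beta_2n_2$, $\nabla'_xn_2=-\mu y-\beta_1n_1$, $\nabla'_yn_2=-\mu x-\beta_2n_1$, with $\mu>0$, $\nu\ne0$, $\mu^2\ne\nu^2$; the functions $\nu,\mu,\gamma_1,\gamma_2,\beta_1,\beta_2$ are the invariants of $M^2$. Parameters $(u,v)$ are semi-canonical if the parametric lines are integral curves of the canonical tangents, with $F=0$, $x=z_u/\sqrt E$, $y=z_v/\sqrt G$; then $\gamma_1=-y(\ln\sqrt E)$, $\gamma_2=-x(\ln\sqrt G)$. *)

From Stdlib Require Import Reals Lra.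
Open Scope R_scope.

Record V4 := mkV4 { c1 : R; c2 : R; c3 : R; c4 : R }.

Definition vadd (p q : V4) : V4 :=
  mkV4 (c1 p + c1 q) (c2 p + c2 q) (c3 p + c3 q) (c4 p + c4 q).
Definition vscale (r : R) (p : V4) : V4 :=
  mkV4 (r * c1 p) (r * c2 p) (r * c3 p) (r * c4 p).
Definition vdot (p q : V4) : R :=
  c1 p * c1 q + c2 p * c2 q + c3 p * c3 q + c4 p * c4 q.

Definition det3 (a11 a12 a13 a21 a22 a23 a31 a32 a33 : R) : R :=
  a11 * (a22 * a33 - a23 * a32) - a12 * (a21 * a33 - a23 * a31)
  + a13 * (a21 * a32 - a22 * a31).

Definition det4 (p q r s : V4) : R :=
    c1 p * det3 (c2 q) (c3 q) (c4 q) (c2 r) (c3 r) (c4 r) (c2 s) (c3 s) (c4 s)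
  - c2 p * det3 (c1 q) (c3 q) (c4 q) (c1 r) (c3 r) (c4 r) (c1 s) (c3 s) (c4 s)
  + c3 p * det3 (c1 q) (c2 q) (c4 q) (c1 r) (c2 r) (c4 r) (c1 s) (c2 s) (c4 s)
  - c4 p * det3 (c1 q) (c2 q) (c3 q) (c1 r) (c2 r) (c3 r) (c1 s) (c2 s) (c3 s).

Definition rect (a b c d : R) (u v : R) : Prop := a < u < b /\ c < v < d.

Definition cont2 (U : R -> R -> Prop) (f : R -> R -> R) : Prop :=
  forall u v, U u v -> forall eps, 0 < eps -> exists del, 0 < del /\
    forall u' v', U u' v' -> Rabs (u' - u) < del -> Rabs (v' - v) < del ->
      Rabs (f u' v' - f u v) < eps.

Definition pdu (f : R -> R -> R) (u v L : R) : Prop :=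
  derivable_pt_lim (fun t => f t v) u L.
Definition pdv (f : R -> R -> R) (u v L : R) : Prop :=
  derivable_pt_lim (fun t => f u t) v L.

(** Smooth (C^infinity) functions on U: all iterated partial derivatives
    exist on U and are jointly continuous. *)
CoInductive smooth2 (U : R -> R -> Prop) (f : R -> R -> R) : Prop :=
  smooth2_intro : forall fu fv : R -> R -> R,
    cont2 U f ->
    (forall u v, U u v -> pdu f u v (fu u v)) ->
    (forall u v, U u v -> pdv f u v (fv u v)) ->
    smooth2 U fu -> smooth2 U fv -> smooth2 U f.

Definition smooth4 (U : R -> R -> Prop) (F : R -> R -> V4) : Prop :=
  smooth2 U (fun s t => c1 (F s t)) /\ smooth2 U (fun s t => c2 (F s t)) /\
  smooth2 U (fun s t => c3 (F s t)) /\ smooth2 U (fun s t => c4 (F s t)).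

Definition pdu4 (F : R -> R -> V4) (u v : R) (W : V4) : Prop :=
  pdu (fun s t => c1 (F s t)) u v (c1 W) /\ pdu (fun s t => c2 (F s t)) u v (c2 W) /\
  pdu (fun s t => c3 (F s t)) u v (c3 W) /\ pdu (fun s t => c4 (F s t)) u v (c4 W).
Definition pdv4 (F : R -> R -> V4) (u v : R) (W : V4) : Prop :=
  pdv (fun s t => c1 (F s t)) u v (c1 W) /\ pdv (fun s t => c2 (F s t)) u v (c2 W) /\
  pdv (fun s t => c3 (F s t)) u v (c3 W) /\ pdv (fun s t => c4 (F s t)) u v (c4 W).

(** First fundamental form coefficients, from zu = z_u and zv = z_v. *)
Definition Ecoef (zu : R -> R -> V4) (u v : R) : R := vdot (zu u v) (zu u v).
Definition Fcoef (zu zv : R -> R -> V4) (u v : R) : R := vdot (zu u v) (zv u v).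
Definition Gcoef (zv : R -> R -> V4) (u v : R) : R := vdot (zv u v) (zv u v).

Definition semi_canonical (U : R -> R -> Prop) (z zu zv x y : R -> R -> V4) : Prop :=
  smooth4 U z /\
  (forall u v, U u v ->
     pdu4 z u v (zu u v) /\ pdv4 z u v (zv u v) /\
     0 < Ecoef zu u v /\ 0 < Gcoef zv u v /\ Fcoef zu zv u v = 0 /\
     x u v = vscale (/ sqrt (Ecoef zu u v)) (zu u v) /\
     y u v = vscale (/ sqrt (Gcoef zv u v)) (zv u v)).

(** Covariant derivatives along x = z_u/sqrt E and y = z_v/sqrt G:
    nabla'_x W = T and nabla'_y W = T on U. *)
Definition nabla_x_eq (U : R -> R -> Prop) (zu W T : R -> R -> V4) : Prop :=
  forall u v, U u v -> exists D, pdu4 W u v D /\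
    vscale (/ sqrt (Ecoef zu u v)) D = T u v.
Definition nabla_y_eq (U : R -> R -> Prop) (zv W T : R -> R -> V4) : Prop :=
  forall u v, U u v -> exists D, pdv4 W u v D /\
    vscale (/ sqrt (Gcoef zv u v)) D = T u v.

Definition lc2 (f : R -> R -> R) (X : R -> R -> V4) (g : R -> R -> R) (Y : R -> R -> V4)
  : R -> R -> V4 := fun u v => vadd (vscale (f u v) (X u v)) (vscale (g u v) (Y u v)).
Definition neg (f : R -> R -> R) : R -> R -> R := fun u v => - f u v.

(** {x,y,n1,n2} is the geometric frame of the surface (with invariants
    nu, mu, g1 = gamma_1, g2 = gamma_2, b1 = beta_1, b2 = beta_2). *)
Definition geometric_frame (U : R -> R -> Prop) (zu zv x y n1 n2 : R -> R -> V4)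
  (nu mu g1 g2 b1 b2 : R -> R -> R) : Prop :=
  smooth4 U x /\ smooth4 U y /\ smooth4 U n1 /\ smooth4 U n2 /\
  smooth2 U nu /\ smooth2 U mu /\ smooth2 U g1 /\ smooth2 U g2 /\
  smooth2 U b1 /\ smooth2 U b2 /\
  (forall u v, U u v ->
     vdot (x u v) (x u v) = 1 /\ vdot (y u v) (y u v) = 1 /\
     vdot (n1 u v) (n1 u v) = 1 /\ vdot (n2 u v) (n2 u v) = 1 /\
     vdot (x u v) (y u v) = 0 /\ vdot (x u v) (n1 u v) = 0 /\
     vdot (x u v) (n2 u v) = 0 /\ vdot (y u v) (n1 u v) = 0 /\
     vdot (y u v) (n2 u v) = 0 /\ vdot (n1 u v) (n2 u v) = 0 /\
     0 < det4 (x u v) (y u v) (n1 u v) (n2 u v) /\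
     0 < mu u v /\ nu u v <> 0 /\ mu u v ^ 2 <> nu u v ^ 2) /\
  nabla_x_eq U zu x (lc2 g1 y nu n1) /\
  nabla_x_eq U zu y (lc2 (neg g1) x mu n2) /\
  nabla_y_eq U zv x (lc2 (neg g2) y mu n2) /\
  nabla_y_eq U zv y (lc2 g2 x (neg nu) n1) /\
  nabla_x_eq U zu n1 (lc2 (neg nu) x b1 n2) /\
  nabla_y_eq U zv n1 (lc2 nu y b2 n2) /\
  nabla_x_eq U zu n2 (lc2 (neg mu) y (neg b1) n1) /\
  nabla_y_eq U zv n2 (lc2 (neg mu) x (neg b2) n1).

(** Write [A = sqrt E] and [B = sqrt G], so that [z_u = A x], [z_v = B y] and
    the frame equations become [x_u = A (gamma_1 y + nu n1)], ... .  For any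
    smooth field [W] with [W_u = P], [W_v = Q], Schwarz's theorem gives
    [P_v = Q_u], hence for every field [K]
        [<P,K>_v - <Q,K>_u = <P,K_v> - <Q,K_u>]          (compatibility).
    Applied to the pairs (z,x), (z,y), (n1,x), (y,n2), (x,n2), (y,n1), (x,y)
    and simplified with the Gram matrix of the frame and [gamma_1 = 0], this
    yields the structure equations
        [A_v = 0], [B_u = -A B gamma_2], [nu_v = -B beta_1 mu],
        [mu_v = -B nu beta_1], [mu_u = A (nu beta_2 + 2 gamma_2 mu)],
        [nu_u = A (mu beta_2 + 2 gamma_2 nu)],
        [gamma_2,u = A (gamma_2^2 - mu^2 - nu^2)].
    From them: [A] and [mu^2 - nu^2] do not depend on [v]; since
    [(mu^2 - nu^2)_u = 4 A gamma_2 (mu^2 - nu^2)], neither does [gamma_2]; by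
    the last equation neither does [mu^2 + nu^2], whose [v]-derivative
    [-4 B mu nu beta_1] therefore vanishes, so [beta_1 = 0]; then [mu], [nu]
    and (from [(mu + nu)_u]) [beta_2] are independent of [v], and the two
    logarithmic formulas are the logarithmic derivatives of [mu^2 - nu^2] and
    of [(mu + nu)/(mu - nu)]. *)

From Pilot Require Import Defs.
From Stdlib Require Import Reals Lra.
(* Re-import so that the projections [c1..c4] of [V4] shadow Stdlib's [c1]. *)
Import Defs.
Open Scope R_scope.

Lemma derivable_pt_lim_locally (f g : R -> R) (x l : R) :
  derivable_pt_lim f x l ->
  (exists r, 0 < r /\ forall t, Rabs (t - x) < r -> f t = g t) ->
  derivable_pt_lim g x l.
Proof.
  intros Hf [r [Hr Heq]] eps Heps.
  destruct (Hf eps Heps) as [del Hdel].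
  assert (Hm : 0 < Rmin del r) by (apply Rmin_pos; [apply (cond_pos del) | lra]).
  exists (mkposreal _ Hm). intros h Hh Hhl. simpl in Hhl.
  rewrite <- (Heq x), <- (Heq (x + h)).
  - apply Hdel; auto. apply Rlt_le_trans with (1 := Hhl). apply Rmin_l.
  - replace (x + h - x) with h by ring. apply Rlt_le_trans with (1 := Hhl). apply Rmin_r.
  - replace (x - x) with 0 by ring. rewrite Rabs_R0. lra.
Qed.

Lemma derivative_unique_locally (f g : R -> R) (x l1 l2 : R) :
  derivable_pt_lim f x l1 -> derivable_pt_lim g x l2 ->
  (exists r, 0 < r /\ forall t, Rabs (t - x) < r -> f t = g t) -> l1 = l2.
Proof.
  intros H1 H2 H3. apply (uniqueness_limite g x); auto.
  apply (derivable_pt_lim_locally f); auto.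
Qed.

Lemma constant_on_interval (g : R -> R) (c d v v' : R) :
  c < v < d -> c < v' < d ->
  (forall t, c < t < d -> derivable_pt_lim g t 0) -> g v = g v'.
Proof.
  intros Hv Hv' H.
  destruct (total_order_T v v') as [[Hl | <-] | Hg]; auto.
  - destruct (MVT_cor2 g (fun _ => 0) v v' Hl) as [t [Ht _]];
      [intros t Ht; apply H; lra | lra].
  - destruct (MVT_cor2 g (fun _ => 0) v' v Hg) as [t [Ht _]];
      [intros t Ht; apply H; lra | lra].
Qed.

Lemma derivable_pt_lim_ln_abs (f : R -> R) (x l : R) :
  derivable_pt_lim f x l -> f x <> 0 ->
  derivable_pt_lim (fun t => ln (Rabs (f t))) x (l / f x).
Proof.
  intros Hf Hne.
  assert (Ha : 0 < Rabs (f x)) by (apply Rabs_pos_lt; auto).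
  destruct (Rlt_or_le 0 (f x)) as [Hp | Hn].
  - pose proof (derivable_pt_lim_comp _ _ _ _ _
      (derivable_pt_lim_comp f Rabs x l 1 Hf (Rabs_derive_1 _ Hp))
      (derivable_pt_lim_ln _ Ha)) as H.
    unfold comp in H. rewrite Rabs_right in H by lra.
    replace (l / f x) with (/ f x * (1 * l)) by (field; auto). exact H.
  - assert (Hneg : f x < 0) by (destruct Hn; [lra | contradiction]).
    pose proof (derivable_pt_lim_comp _ _ _ _ _
      (derivable_pt_lim_comp f Rabs x l (-1) Hf (Rabs_derive_2 _ Hneg))
      (derivable_pt_lim_ln _ Ha)) as H.
    unfold comp in H. rewrite Rabs_left in H by lra.
    replace (l / f x) with (/ - f x * (-1 * l)) by (field; auto). exact H.
Qed.

Lemma derivable_pt_lim_square (f : R -> R) (x l : R) :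
  derivable_pt_lim f x l -> derivable_pt_lim (fun t => f t ^ 2) x (2 * f x * l).
Proof.
  intros H. apply (derivable_pt_lim_locally (fun t => f t * f t)).
  - replace (2 * f x * l) with (l * f x + f x * l) by ring.
    exact (derivable_pt_lim_mult _ _ _ _ _ H H).
  - exists 1. split; [lra | intros; ring].
Qed.

Lemma ln_sqrt_abs_ratio (p q : R) : p <> 0 -> q <> 0 ->
  ln (sqrt (Rabs (p / q))) = / 2 * (ln (Rabs p) - ln (Rabs q)).
Proof.
  intros Hp Hq.
  assert (P1 : 0 < Rabs p) by (apply Rabs_pos_lt; auto).
  assert (P2 : 0 < Rabs q) by (apply Rabs_pos_lt; auto).
  assert (P3 : 0 < Rabs (p / q)).
  { unfold Rdiv. rewrite Rabs_mult, Rabs_inv. apply Rmult_lt_0_compat; auto.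
    apply Rinv_0_lt_compat; auto. }
  assert (Hsq : ln (Rabs (p / q)) = 2 * ln (sqrt (Rabs (p / q)))).
  { rewrite <- (sqrt_sqrt (Rabs (p / q))) at 1 by lra.
    rewrite ln_mult by (apply sqrt_lt_R0; auto). ring. }
  assert (Hdiv : ln (Rabs (p / q)) = ln (Rabs p) - ln (Rabs q)).
  { unfold Rdiv. rewrite Rabs_mult, Rabs_inv, ln_mult, ln_Rinv; auto.
    apply Rinv_0_lt_compat; auto. }
  lra.
Qed.

Lemma rect_nbhd_u (a b c d u v : R) : rect a b c d u v ->
  exists r, 0 < r /\ forall s, Rabs (s - u) < r -> rect a b c d s v.
Proof.
  intros [Hu Hv]. exists (Rmin (u - a) (b - u)). split.
  - apply Rmin_pos; lra.
  - intros s Hs. split; auto. apply Rabs_def2 in Hs.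
    pose proof (Rmin_l (u - a) (b - u)). pose proof (Rmin_r (u - a) (b - u)). lra.
Qed.

Lemma rect_nbhd_v (a b c d u v : R) : rect a b c d u v ->
  exists r, 0 < r /\ forall t, Rabs (t - v) < r -> rect a b c d u t.
Proof.
  intros [Hu Hv]. exists (Rmin (v - c) (d - v)). split.
  - apply Rmin_pos; lra.
  - intros t Ht. split; auto. apply Rabs_def2 in Ht.
    pose proof (Rmin_l (v - c) (d - v)). pose proof (Rmin_r (v - c) (d - v)). lra.
Qed.

Lemma derivable_pt_lim_rect_u (a b c d u v : R) (f g : R -> R) (l : R) :
  rect a b c d u v -> (forall s, rect a b c d s v -> f s = g s) ->
  derivable_pt_lim f u l -> derivable_pt_lim g u l.
Proof.
  intros Hr He Hf. apply (derivable_pt_lim_locally f); auto.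
  destruct (rect_nbhd_u _ _ _ _ _ _ Hr) as [r [Hr0 Hr1]]. eauto.
Qed.

Lemma derivable_pt_lim_rect_v (a b c d u v : R) (f g : R -> R) (l : R) :
  rect a b c d u v -> (forall t, rect a b c d u t -> f t = g t) ->
  derivable_pt_lim f v l -> derivable_pt_lim g v l.
Proof.
  intros Hr He Hf. apply (derivable_pt_lim_locally f); auto.
  destruct (rect_nbhd_v _ _ _ _ _ _ Hr) as [r [Hr0 Hr1]]. eauto.
Qed.

(** The second difference of [f] over the square [u,u+h] x [v,v+h] equals
    [h^2 f_uv] at an interior point (mean value theorem, twice). *)
Lemma second_difference_mvt (f fu fuv : R -> R -> R) (u v h : R) : 0 < h ->
  (forall s t, u <= s <= u + h -> v <= t <= v + h ->
     pdu f s t (fu s t) /\ pdv fu s t (fuv s t)) ->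
  exists s t, u < s < u + h /\ v < t < v + h /\
    f (u + h) (v + h) - f (u + h) v - f u (v + h) + f u v = fuv s t * (h * h).
Proof.
  intros Hh Hd.
  destruct (MVT_cor2 (fun s => f s (v + h) - f s v) (fun s => fu s (v + h) - fu s v)
              u (u + h)) as [s [Es Hs]]; [lra | |].
  { intros s Hs. apply derivable_pt_lim_minus; apply Hd; lra. }
  destruct (MVT_cor2 (fun t => fu s t) (fun t => fuv s t) v (v + h))
    as [t [Et Ht]]; [lra | intros t Ht; apply Hd; lra |].
  exists s, t. split; [lra | split; [lra |]].
  replace (u + h - u) with h in Es by ring. replace (v + h - v) with h in Et by ring.
  transitivity ((fu s (v + h) - fu s v) * h); [rewrite <- Es; ring | rewrite Et; ring].
Qed.

Lemma mixed_partials_commute (a b c d : R) (f fu fv fuv fvu : R -> R -> R) :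
  (forall u v, rect a b c d u v -> pdu f u v (fu u v)) ->
  (forall u v, rect a b c d u v -> pdv f u v (fv u v)) ->
  (forall u v, rect a b c d u v -> pdv fu u v (fuv u v)) ->
  (forall u v, rect a b c d u v -> pdu fv u v (fvu u v)) ->
  cont2 (rect a b c d) fuv -> cont2 (rect a b c d) fvu ->
  forall u v, rect a b c d u v -> fuv u v = fvu u v.
Proof.
  intros Hu Hv Huv Hvu C1 C2 u v Hr. apply cond_eq. intros eps Heps.
  destruct (C1 u v Hr (eps / 2) ltac:(lra)) as [d1 [Hd1 H1]].
  destruct (C2 u v Hr (eps / 2) ltac:(lra)) as [d2 [Hd2 H2]].
  destruct Hr as [[Hau Hub] [Hcv Hvd]].
  set (h := Rmin (Rmin d1 d2) (Rmin (b - u) (d - v)) / 2).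
  pose proof (Rmin_l (Rmin d1 d2) (Rmin (b - u) (d - v))).
  pose proof (Rmin_r (Rmin d1 d2) (Rmin (b - u) (d - v))).
  pose proof (Rmin_l d1 d2). pose proof (Rmin_r d1 d2).
  pose proof (Rmin_l (b - u) (d - v)). pose proof (Rmin_r (b - u) (d - v)).
  assert (0 < Rmin (Rmin d1 d2) (Rmin (b - u) (d - v)))
    by (apply Rmin_pos; apply Rmin_pos; lra).
  assert (Hh : 0 < h /\ h < d1 /\ h < d2 /\ u + h < b /\ v + h < d) by (unfold h; lra).
  assert (Hin : forall s t, u <= s <= u + h -> v <= t <= v + h -> rect a b c d s t)
    by (intros; split; lra).
  destruct (second_difference_mvt f fu fuv u v h) as (s & t & Hs & Ht & Euv); [lra | |].
  { intros s t Hs Ht. split; [apply Hu | apply Huv]; apply Hin; auto. }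
  (* the same second difference, computed with the variables swapped *)
  destruct (second_difference_mvt (fun t s => f s t) (fun t s => fv s t)
              (fun t s => fvu s t) v u h) as (t' & s' & Ht' & Hs' & Evu); [lra | |].
  { intros t' s' Ht' Hs'. split; [apply Hv | apply Hvu]; apply Hin; auto. }
  assert (Hmix : fuv s t = fvu s' t').
  { apply Rmult_eq_reg_r with (h * h); [| apply Rgt_not_eq; nra].
    rewrite <- Euv, <- Evu. ring. }
  specialize (H1 s t ltac:(apply Hin; lra) ltac:(apply Rabs_def1; lra)
                ltac:(apply Rabs_def1; lra)).
  specialize (H2 s' t' ltac:(apply Hin; lra) ltac:(apply Rabs_def1; lra)
                ltac:(apply Rabs_def1; lra)).
  rewrite Hmix in H1. apply Rabs_def2 in H1. apply Rabs_def2 in H2.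
  apply Rabs_def1; lra.
Qed.

Lemma smooth2_mixed_partials (a b c d : R) (f P Q : R -> R -> R) :
  smooth2 (rect a b c d) f ->
  (forall u v, rect a b c d u v -> pdu f u v (P u v)) ->
  (forall u v, rect a b c d u v -> pdv f u v (Q u v)) ->
  forall u v, rect a b c d u v -> exists L, pdv P u v L /\ pdu Q u v L.
Proof.
  intros [fu fv _ Hfu Hfv Sfu Sfv] HP HQ u v Hr.
  destruct Sfu as [_ fuv _ _ Hfuv _ [_ _ Cuv _ _ _ _]].
  destruct Sfv as [fvu _ _ Hfvu _ [_ _ Cvu _ _ _ _] _].
  assert (EP : forall s t, rect a b c d s t -> fu s t = P s t)
    by (intros s t Hst; exact (uniqueness_limite _ s _ _ (Hfu s t Hst) (HP s t Hst))).
  assert (EQ : forall s t, rect a b c d s t -> fv s t = Q s t)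
    by (intros s t Hst; exact (uniqueness_limite _ t _ _ (Hfv s t Hst) (HQ s t Hst))).
  exists (fuv u v). split.
  - apply (derivable_pt_lim_rect_v a b c d u v (fun t => fu u t)); auto. apply Hfuv; auto.
  - rewrite (mixed_partials_commute a b c d f fu fv fuv fvu Hfu Hfv Hfuv Hfvu
               Cuv Cvu u v Hr).
    apply (derivable_pt_lim_rect_u a b c d u v (fun s => fv s v)); auto. apply Hfvu; auto.
Qed.

Lemma vdot_addl (p q r : V4) : vdot (vadd p q) r = vdot p r + vdot q r.
Proof. unfold vdot, vadd; simpl; ring. Qed.
Lemma vdot_addr (p q r : V4) : vdot r (vadd p q) = vdot r p + vdot r q.
Proof. unfold vdot, vadd; simpl; ring. Qed.
Lemma vdot_scalel (k : R) (p q : V4) : vdot (vscale k p) q = k * vdot p q.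
Proof. unfold vdot, vscale; simpl; ring. Qed.
Lemma vdot_scaler (k : R) (p q : V4) : vdot q (vscale k p) = k * vdot q p.
Proof. unfold vdot, vscale; simpl; ring. Qed.
Lemma vdot_comm (p q : V4) : vdot p q = vdot q p.
Proof. unfold vdot; ring. Qed.
Lemma vscale_vscale_inv (k : R) (p : V4) : k <> 0 -> vscale k (vscale (/ k) p) = p.
Proof. intros Hk. destruct p. unfold vscale; simpl. f_equal; field; auto. Qed.

Definition derivable_pt_lim4 (P : R -> V4) (x : R) (D : V4) : Prop :=
  derivable_pt_lim (fun t => c1 (P t)) x (c1 D) /\
  derivable_pt_lim (fun t => c2 (P t)) x (c2 D) /\
  derivable_pt_lim (fun t => c3 (P t)) x (c3 D) /\
  derivable_pt_lim (fun t => c4 (P t)) x (c4 D).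

Lemma derivable_pt_lim_vdot (P K : R -> V4) (x : R) (DP DK : V4) :
  derivable_pt_lim4 P x DP -> derivable_pt_lim4 K x DK ->
  derivable_pt_lim (fun t => vdot (P t) (K t)) x (vdot DP (K x) + vdot (P x) DK).
Proof.
  intros (P1 & P2 & P3 & P4) (K1 & K2 & K3 & K4).
  pose proof (derivable_pt_lim_plus _ _ _ _ _
    (derivable_pt_lim_plus _ _ _ _ _
      (derivable_pt_lim_plus _ _ _ _ _ (derivable_pt_lim_mult _ _ _ _ _ P1 K1)
         (derivable_pt_lim_mult _ _ _ _ _ P2 K2))
      (derivable_pt_lim_mult _ _ _ _ _ P3 K3))
    (derivable_pt_lim_mult _ _ _ _ _ P4 K4)) as H.
  unfold vdot. match goal with |- derivable_pt_lim _ _ ?l => replace l with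
    (c1 DP * c1 (K x) + c1 (P x) * c1 DK + (c2 DP * c2 (K x) + c2 (P x) * c2 DK) +
     (c3 DP * c3 (K x) + c3 (P x) * c3 DK) + (c4 DP * c4 (K x) + c4 (P x) * c4 DK))
    by ring end.
  exact H.
Qed.

(** All the structure
    equations of the surface are instances of this identity. *)
Lemma compatibility (a b c d : R) (W P Q K : R -> R -> V4) (p q : R -> R)
  (u v : R) (Ku Kv : V4) :
  smooth4 (rect a b c d) W ->
  (forall s t, rect a b c d s t -> pdu4 W s t (P s t)) ->
  (forall s t, rect a b c d s t -> pdv4 W s t (Q s t)) ->
  rect a b c d u v -> pdu4 K u v Ku -> pdv4 K u v Kv ->
  (forall t, rect a b c d u t -> vdot (P u t) (K u t) = p t) ->
  (forall s, rect a b c d s v -> vdot (Q s v) (K s v) = q s) ->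
  exists lp lq, derivable_pt_lim p v lp /\ derivable_pt_lim q u lq /\
    lp - lq = vdot (P u v) Kv - vdot (Q u v) Ku.
Proof.
  intros (S1 & S2 & S3 & S4) HP HQ Hr HKu HKv Ep Eq.
  destruct (smooth2_mixed_partials _ _ _ _ _ (fun s t => c1 (P s t)) (fun s t => c1 (Q s t))
    S1 ltac:(intros; apply HP; auto) ltac:(intros; apply HQ; auto) u v Hr) as [L1 [A1 B1]].
  destruct (smooth2_mixed_partials _ _ _ _ _ (fun s t => c2 (P s t)) (fun s t => c2 (Q s t))
    S2 ltac:(intros; apply HP; auto) ltac:(intros; apply HQ; auto) u v Hr) as [L2 [A2 B2]].
  destruct (smooth2_mixed_partials _ _ _ _ _ (fun s t => c3 (P s t)) (fun s t => c3 (Q s t))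
    S3 ltac:(intros; apply HP; auto) ltac:(intros; apply HQ; auto) u v Hr) as [L3 [A3 B3]].
  destruct (smooth2_mixed_partials _ _ _ _ _ (fun s t => c4 (P s t)) (fun s t => c4 (Q s t))
    S4 ltac:(intros; apply HP; auto) ltac:(intros; apply HQ; auto) u v Hr) as [L4 [A4 B4]].
  (* [L] is the common value of [P_v] and [Q_u] at [(u,v)] *)
  set (L := mkV4 L1 L2 L3 L4).
  exists (vdot L (K u v) + vdot (P u v) Kv), (vdot L (K u v) + vdot (Q u v) Ku).
  split; [| split].
  - apply (derivable_pt_lim_rect_v a b c d u v _ _ _ Hr Ep).
    apply (derivable_pt_lim_vdot (fun t => P u t) (fun t => K u t)); [| exact HKv].
    repeat split; assumption.
  - apply (derivable_pt_lim_rect_u a b c d u v _ _ _ Hr Eq).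
    apply (derivable_pt_lim_vdot (fun s => Q s v) (fun s => K s v)); [| exact HKu].
    repeat split; assumption.
  - ring.
Qed.

Definition v_indep (a b c d : R) (f : R -> R -> R) : Prop :=
  forall u v v', rect a b c d u v -> rect a b c d u v' -> f u v = f u v'.

Lemma v_indep_of_dv_zero (a b c d : R) (f : R -> R -> R) :
  (forall u v, rect a b c d u v -> derivable_pt_lim (fun t => f u t) v 0) ->
  v_indep a b c d f.
Proof.
  intros H u v v' [Hu Hv] [_ Hv'].
  apply (constant_on_interval (fun t => f u t) c d); auto.
  intros t Ht. apply H. split; auto.
Qed.

Lemma dv_zero_of_v_indep (a b c d : R) (f : R -> R -> R) (u v L : R) :
  v_indep a b c d f -> rect a b c d u v ->
  derivable_pt_lim (fun t => f u t) v L -> L = 0.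
Proof.
  intros Hf Hr HL. destruct (rect_nbhd_v _ _ _ _ _ _ Hr) as [r [Hr0 Hr1]].
  apply (derivative_unique_locally (fun t => f u t) (fct_cte (f u v)) v); auto.
  - apply derivable_pt_lim_const.
  - exists r. split; auto. intros t Ht. symmetry. apply Hf; auto.
Qed.

Lemma v_indep_du (a b c d : R) (f : R -> R -> R) (u v v' L L' : R) :
  v_indep a b c d f -> rect a b c d u v -> rect a b c d u v' ->
  derivable_pt_lim (fun s => f s v) u L -> derivable_pt_lim (fun s => f s v') u L' ->
  L = L'.
Proof.
  intros Hf Hr Hr' HL HL'. destruct (rect_nbhd_u _ _ _ _ _ _ Hr) as [r [Hr0 Hr1]].
  apply (derivative_unique_locally _ _ u _ _ HL HL'). exists r. split; auto.
  intros s Hs. apply Hf; auto. destruct (Hr1 s Hs), Hr'. split; auto.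
Qed.

Lemma derivable_pt_lim_value (f : R -> R) (x l l' : R) :
  derivable_pt_lim f x l -> l = l' -> derivable_pt_lim f x l'.
Proof. intros H <-. exact H. Qed.

Lemma smooth2_pdu (U : R -> R -> Prop) (f : R -> R -> R) (u v : R) :
  smooth2 U f -> U u v -> exists L, derivable_pt_lim (fun s => f s v) u L.
Proof. intros [fu fv _ Hfu _ _ _] Hr. exists (fu u v). exact (Hfu u v Hr). Qed.

Lemma smooth2_pdv (U : R -> R -> Prop) (f : R -> R -> R) (u v : R) :
  smooth2 U f -> U u v -> exists L, derivable_pt_lim (fun t => f u t) v L.
Proof. intros [fu fv _ _ Hfv _ _] Hr. exists (fv u v). exact (Hfv u v Hr). Qed.

Definition sqrtE (zu : R -> R -> V4) (u v : R) : R := sqrt (Ecoef zu u v).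
Definition sqrtG (zv : R -> R -> V4) (u v : R) : R := sqrt (Gcoef zv u v).

(** Since [x = z_u / sqrt E], a frame equation [nabla'_x W = T] says
    [W_u = sqrt E * T]; similarly in the [v]-direction. *)
Lemma pdu4_of_nabla_x (U : R -> R -> Prop) (zu W T : R -> R -> V4) :
  nabla_x_eq U zu W T -> (forall u v, U u v -> 0 < Ecoef zu u v) ->
  forall u v, U u v -> pdu4 W u v (vscale (sqrtE zu u v) (T u v)).
Proof.
  intros H HE u v Hr. destruct (H u v Hr) as [D [HD <-]]. unfold sqrtE.
  rewrite vscale_vscale_inv; auto. apply Rgt_not_eq, sqrt_lt_R0; auto.
Qed.

Lemma pdv4_of_nabla_y (U : R -> R -> Prop) (zv W T : R -> R -> V4) :
  nabla_y_eq U zv W T -> (forall u v, U u v -> 0 < Gcoef zv u v) ->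
  forall u v, U u v -> pdv4 W u v (vscale (sqrtG zv u v) (T u v)).
Proof.
  intros H HG u v Hr. destruct (H u v Hr) as [D [HD <-]]. unfold sqrtG.
  rewrite vscale_vscale_inv; auto. apply Rgt_not_eq, sqrt_lt_R0; auto.
Qed.

Section MinimalSurfaceWithGamma1Zero.

Variables (a b c d : R) (z zu zv x y n1 n2 : R -> R -> V4)
  (nu mu g1 g2 b1 b2 : R -> R -> R).
Hypothesis Hsc : semi_canonical (rect a b c d) z zu zv x y.
Hypothesis Hgf : geometric_frame (rect a b c d) zu zv x y n1 n2 nu mu g1 g2 b1 b2.
Hypothesis Hg1 : forall u v, rect a b c d u v -> g1 u v = 0.

Local Notation U := (rect a b c d).
Local Notation A := (sqrtE zu).
Local Notation B := (sqrtG zv).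

Lemma E_pos u v : U u v -> 0 < Ecoef zu u v.
Proof. intros Hr. apply Hsc, Hr. Qed.
Lemma G_pos u v : U u v -> 0 < Gcoef zv u v.
Proof. intros Hr. apply Hsc, Hr. Qed.
Lemma sqrtE_pos u v : U u v -> 0 < A u v.
Proof. intros Hr. apply sqrt_lt_R0, E_pos, Hr. Qed.
Lemma sqrtG_pos u v : U u v -> 0 < B u v.
Proof. intros Hr. apply sqrt_lt_R0, G_pos, Hr. Qed.

Lemma z_smooth : smooth4 U z. Proof. apply Hsc. Qed.
Lemma x_smooth : smooth4 U x. Proof. apply Hgf. Qed.
Lemma y_smooth : smooth4 U y. Proof. apply Hgf. Qed.
Lemma n1_smooth : smooth4 U n1. Proof. apply Hgf. Qed.
Lemma mu_smooth : smooth2 U mu. Proof. apply Hgf. Qed.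
Lemma nu_smooth : smooth2 U nu. Proof. apply Hgf. Qed.
Lemma g2_smooth : smooth2 U g2. Proof. apply Hgf. Qed.

Lemma z_du u v : U u v -> pdu4 z u v (zu u v).
Proof. intros Hr. apply Hsc, Hr. Qed.
Lemma z_dv u v : U u v -> pdv4 z u v (zv u v).
Proof. intros Hr. apply Hsc, Hr. Qed.

Lemma zu_frame u v : U u v -> zu u v = vscale (A u v) (x u v).
Proof.
  intros Hr. destruct (proj2 Hsc u v Hr) as (_ & _ & _ & _ & _ & -> & _).
  unfold sqrtE. rewrite vscale_vscale_inv; auto. apply Rgt_not_eq, sqrtE_pos, Hr.
Qed.
Lemma zv_frame u v : U u v -> zv u v = vscale (B u v) (y u v).
Proof.
  intros Hr. destruct (proj2 Hsc u v Hr) as (_ & _ & _ & _ & _ & _ & ->).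
  unfold sqrtG. rewrite vscale_vscale_inv; auto. apply Rgt_not_eq, sqrtG_pos, Hr.
Qed.

Lemma x_du u v : U u v -> pdu4 x u v (vscale (A u v) (lc2 g1 y nu n1 u v)).
Proof. apply pdu4_of_nabla_x; [apply Hgf | exact E_pos]. Qed.
Lemma x_dv u v : U u v -> pdv4 x u v (vscale (B u v) (lc2 (neg g2) y mu n2 u v)).
Proof. apply pdv4_of_nabla_y; [apply Hgf | exact G_pos]. Qed.
Lemma y_du u v : U u v -> pdu4 y u v (vscale (A u v) (lc2 (neg g1) x mu n2 u v)).
Proof. apply pdu4_of_nabla_x; [apply Hgf | exact E_pos]. Qed.
Lemma y_dv u v : U u v -> pdv4 y u v (vscale (B u v) (lc2 g2 x (neg nu) n1 u v)).
Proof. apply pdv4_of_nabla_y; [apply Hgf | exact G_pos]. Qed.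
Lemma n1_du u v : U u v -> pdu4 n1 u v (vscale (A u v) (lc2 (neg nu) x b1 n2 u v)).
Proof. apply pdu4_of_nabla_x; [apply Hgf | exact E_pos]. Qed.
Lemma n1_dv u v : U u v -> pdv4 n1 u v (vscale (B u v) (lc2 nu y b2 n2 u v)).
Proof. apply pdv4_of_nabla_y; [apply Hgf | exact G_pos]. Qed.
Lemma n2_du u v : U u v -> pdu4 n2 u v (vscale (A u v) (lc2 (neg mu) y (neg b1) n1 u v)).
Proof. apply pdu4_of_nabla_x; [apply Hgf | exact E_pos]. Qed.
Lemma n2_dv u v : U u v -> pdv4 n2 u v (vscale (B u v) (lc2 (neg mu) x (neg b2) n1 u v)).
Proof. apply pdv4_of_nabla_y; [apply Hgf | exact G_pos]. Qed.

Lemma frame_gram u v : U u v ->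
  vdot (x u v) (x u v) = 1 /\ vdot (y u v) (y u v) = 1 /\
  vdot (n1 u v) (n1 u v) = 1 /\ vdot (n2 u v) (n2 u v) = 1 /\
  vdot (x u v) (y u v) = 0 /\ vdot (y u v) (x u v) = 0 /\
  vdot (x u v) (n1 u v) = 0 /\ vdot (n1 u v) (x u v) = 0 /\
  vdot (x u v) (n2 u v) = 0 /\ vdot (n2 u v) (x u v) = 0 /\
  vdot (y u v) (n1 u v) = 0 /\ vdot (n1 u v) (y u v) = 0 /\
  vdot (y u v) (n2 u v) = 0 /\ vdot (n2 u v) (y u v) = 0 /\
  vdot (n1 u v) (n2 u v) = 0 /\ vdot (n2 u v) (n1 u v) = 0.
Proof.
  intros Hr. destruct Hgf as (_ & _ & _ & _ & _ & _ & _ & _ & _ & _ & Hon & _).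
  destruct (Hon u v Hr) as (? & ? & ? & ? & ? & ? & ? & ? & ? & ? & _).
  rewrite !(vdot_comm (y u v) (x u v)), !(vdot_comm (n1 u v) (x u v)),
    !(vdot_comm (n2 u v) (x u v)), !(vdot_comm (n1 u v) (y u v)),
    !(vdot_comm (n2 u v) (y u v)), !(vdot_comm (n2 u v) (n1 u v)).
  tauto.
Qed.

Lemma mu_pos u v : U u v -> 0 < mu u v.
Proof. intros Hr. apply Hgf, Hr. Qed.
Lemma nu_neq0 u v : U u v -> nu u v <> 0.
Proof. intros Hr. apply Hgf, Hr. Qed.
Lemma norm_diff_neq0 u v : U u v -> mu u v ^ 2 - nu u v ^ 2 <> 0.
Proof.
  intros Hr. assert (H : mu u v ^ 2 <> nu u v ^ 2) by apply Hgf, Hr. lra.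
Qed.
Lemma mu_plus_minus_nu_neq0 u v : U u v -> mu u v + nu u v <> 0 /\ mu u v - nu u v <> 0.
Proof.
  intros Hr. pose proof (norm_diff_neq0 u v Hr) as H.
  split; intro Hc; apply H.
  - replace (mu u v) with (- nu u v) by lra. ring.
  - replace (mu u v) with (nu u v) by lra. ring.
Qed.


Ltac expand_frame Hr :=
  destruct (frame_gram _ _ Hr) as (Gxx & Gyy & G11 & G22 & Gxy & Gyx & Gx1 & G1x &
    Gx2 & G2x & Gy1 & G1y & Gy2 & G2y & G12 & G21);
  unfold lc2, neg;
  repeat rewrite ?vdot_addl, ?vdot_addr, ?vdot_scalel, ?vdot_scaler;
  rewrite ?Gxx, ?Gyy, ?G11, ?G22, ?Gxy, ?Gyx, ?Gx1, ?G1x, ?Gx2, ?G2x, ?Gy1, ?G1y,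
    ?Gy2, ?G2y, ?G12, ?G21, ?(Hg1 _ _ Hr);
  clear Gxx Gyy G11 G22 Gxy Gyx Gx1 G1x Gx2 G2x Gy1 G1y Gy2 G2y G12 G21.

(** First, [(sqrt E)_v = 0] (this is
    [gamma_1 = -y(ln sqrt E)]) and [(sqrt G)_u = - sqrt E sqrt G gamma_2]. *)
Lemma sqrtE_dv u v : U u v -> derivable_pt_lim (fun t => A u t) v 0.
Proof.
  intros Hr.
  destruct (compatibility a b c d z zu zv x (fun t => A u t) (fun _ => 0) u v _ _
              z_smooth z_du z_dv Hr (x_du u v Hr) (x_dv u v Hr)) as (lp & lq & Dp & Dq & E).
  { intros t Ht. rewrite (zu_frame u t Ht). expand_frame Ht. ring. }
  { intros s Hs. rewrite (zv_frame s v Hs). expand_frame Hs. ring. }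
  rewrite (uniqueness_limite _ _ _ _ Dq (derivable_pt_lim_const 0 u)) in E.
  revert E. rewrite (zu_frame u v Hr), (zv_frame u v Hr). expand_frame Hr. intros E.
  apply (derivable_pt_lim_value _ _ _ _ Dp). lra.
Qed.

Lemma sqrtG_du u v : U u v ->
  derivable_pt_lim (fun s => B s v) u (- (A u v * B u v * g2 u v)).
Proof.
  intros Hr.
  destruct (compatibility a b c d z zu zv y (fun _ => 0) (fun s => B s v) u v _ _
              z_smooth z_du z_dv Hr (y_du u v Hr) (y_dv u v Hr)) as (lp & lq & Dp & Dq & E).
  { intros t Ht. rewrite (zu_frame u t Ht). expand_frame Ht. ring. }
  { intros s Hs. rewrite (zv_frame s v Hs). expand_frame Hs. ring. }
  rewrite (uniqueness_limite _ _ _ _ Dp (derivable_pt_lim_const 0 v)) in E.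
  revert E. rewrite (zu_frame u v Hr), (zv_frame u v Hr). expand_frame Hr. intros E.
  apply (derivable_pt_lim_value _ _ _ _ Dq). lra.
Qed.

Lemma nu_dv u v : U u v ->
  derivable_pt_lim (fun t => nu u t) v (- (B u v * b1 u v * mu u v)).
Proof.
  intros Hr. destruct (smooth2_pdv _ _ u v nu_smooth Hr) as [L HL].
  destruct (compatibility a b c d n1 _ _ x (fun t => - (A u t * nu u t)) (fun _ => 0) u v _ _
              n1_smooth n1_du n1_dv Hr (x_du u v Hr) (x_dv u v Hr)) as (lp & lq & Dp & Dq & E).
  { intros t Ht. expand_frame Ht. ring. }
  { intros s Hs. expand_frame Hs. ring. }
  rewrite (uniqueness_limite _ _ _ _ Dp (derivable_pt_lim_opp _ _ _
             (derivable_pt_lim_mult _ _ _ _ _ (sqrtE_dv u v Hr) HL))),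
    (uniqueness_limite _ _ _ _ Dq (derivable_pt_lim_const 0 u)) in E.
  revert E. expand_frame Hr. intros E.
  apply (derivable_pt_lim_value _ _ _ _ HL).
  apply (Rmult_eq_reg_l (A u v)); [lra | apply Rgt_not_eq, sqrtE_pos, Hr].
Qed.

Lemma mu_dv u v : U u v ->
  derivable_pt_lim (fun t => mu u t) v (- (B u v * nu u v * b1 u v)).
Proof.
  intros Hr. destruct (smooth2_pdv _ _ u v mu_smooth Hr) as [L HL].
  destruct (compatibility a b c d y _ _ n2 (fun t => A u t * mu u t) (fun _ => 0) u v _ _
              y_smooth y_du y_dv Hr (n2_du u v Hr) (n2_dv u v Hr)) as (lp & lq & Dp & Dq & E).
  { intros t Ht. expand_frame Ht. ring. }
  { intros s Hs. expand_frame Hs. ring. }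
  rewrite (uniqueness_limite _ _ _ _ Dp
             (derivable_pt_lim_mult _ _ _ _ _ (sqrtE_dv u v Hr) HL)),
    (uniqueness_limite _ _ _ _ Dq (derivable_pt_lim_const 0 u)) in E.
  revert E. expand_frame Hr. intros E.
  apply (derivable_pt_lim_value _ _ _ _ HL).
  apply (Rmult_eq_reg_l (A u v)); [lra | apply Rgt_not_eq, sqrtE_pos, Hr].
Qed.

Lemma mu_du u v : U u v ->
  derivable_pt_lim (fun s => mu s v) u (A u v * (nu u v * b2 u v + 2 * g2 u v * mu u v)).
Proof.
  intros Hr. destruct (smooth2_pdu _ _ u v mu_smooth Hr) as [L HL].
  destruct (compatibility a b c d x _ _ n2 (fun _ => 0) (fun s => B s v * mu s v) u v _ _
              x_smooth x_du x_dv Hr (n2_du u v Hr) (n2_dv u v Hr)) as (lp & lq & Dp & Dq & E).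
  { intros t Ht. expand_frame Ht. ring. }
  { intros s Hs. expand_frame Hs. ring. }
  rewrite (uniqueness_limite _ _ _ _ Dp (derivable_pt_lim_const 0 v)),
    (uniqueness_limite _ _ _ _ Dq
       (derivable_pt_lim_mult _ _ _ _ _ (sqrtG_du u v Hr) HL)) in E.
  revert E. expand_frame Hr. intros E.
  apply (derivable_pt_lim_value _ _ _ _ HL).
  apply (Rmult_eq_reg_l (B u v)); [lra | apply Rgt_not_eq, sqrtG_pos, Hr].
Qed.

Lemma nu_du u v : U u v ->
  derivable_pt_lim (fun s => nu s v) u (A u v * (mu u v * b2 u v + 2 * g2 u v * nu u v)).
Proof.
  intros Hr. destruct (smooth2_pdu _ _ u v nu_smooth Hr) as [L HL].
  destruct (compatibility a b c d y _ _ n1 (fun _ => 0) (fun s => - (B s v * nu s v)) u v _ _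
              y_smooth y_du y_dv Hr (n1_du u v Hr) (n1_dv u v Hr)) as (lp & lq & Dp & Dq & E).
  { intros t Ht. expand_frame Ht. ring. }
  { intros s Hs. expand_frame Hs. ring. }
  rewrite (uniqueness_limite _ _ _ _ Dp (derivable_pt_lim_const 0 v)),
    (uniqueness_limite _ _ _ _ Dq (derivable_pt_lim_opp _ _ _
       (derivable_pt_lim_mult _ _ _ _ _ (sqrtG_du u v Hr) HL))) in E.
  revert E. expand_frame Hr. intros E.
  apply (derivable_pt_lim_value _ _ _ _ HL).
  apply (Rmult_eq_reg_l (B u v)); [lra | apply Rgt_not_eq, sqrtG_pos, Hr].
Qed.

(** [gamma2_u = sqrt E (gamma_2^2 - mu^2 - nu^2)] (the Gauss equation). *)
Lemma g2_du u v : U u v ->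
  derivable_pt_lim (fun s => g2 s v) u (A u v * (g2 u v ^ 2 - mu u v ^ 2 - nu u v ^ 2)).
Proof.
  intros Hr. destruct (smooth2_pdu _ _ u v g2_smooth Hr) as [L HL].
  destruct (compatibility a b c d x _ _ y (fun _ => 0) (fun s => - (B s v * g2 s v)) u v _ _
              x_smooth x_du x_dv Hr (y_du u v Hr) (y_dv u v Hr)) as (lp & lq & Dp & Dq & E).
  { intros t Ht. expand_frame Ht. ring. }
  { intros s Hs. expand_frame Hs. ring. }
  rewrite (uniqueness_limite _ _ _ _ Dp (derivable_pt_lim_const 0 v)),
    (uniqueness_limite _ _ _ _ Dq (derivable_pt_lim_opp _ _ _
       (derivable_pt_lim_mult _ _ _ _ _ (sqrtG_du u v Hr) HL))) in E.
  revert E. expand_frame Hr. intros E.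
  apply (derivable_pt_lim_value _ _ _ _ HL).
  apply (Rmult_eq_reg_l (B u v)); [lra | apply Rgt_not_eq, sqrtG_pos, Hr].
Qed.

Lemma sqrtE_v_indep : v_indep a b c d A.
Proof. apply v_indep_of_dv_zero. exact sqrtE_dv. Qed.

Lemma norm_diff_v_indep : v_indep a b c d (fun u v => mu u v ^ 2 - nu u v ^ 2).
Proof.
  apply v_indep_of_dv_zero. intros u v Hr.
  eapply derivable_pt_lim_value.
  - exact (derivable_pt_lim_minus _ _ _ _ _ (derivable_pt_lim_square _ _ _ (mu_dv u v Hr))
             (derivable_pt_lim_square _ _ _ (nu_dv u v Hr))).
  - cbv beta. ring.
Qed.

Lemma norm_diff_du u v : U u v ->
  derivable_pt_lim (fun s => mu s v ^ 2 - nu s v ^ 2) u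
    (4 * A u v * g2 u v * (mu u v ^ 2 - nu u v ^ 2)).
Proof.
  intros Hr. eapply derivable_pt_lim_value.
  - exact (derivable_pt_lim_minus _ _ _ _ _ (derivable_pt_lim_square _ _ _ (mu_du u v Hr))
             (derivable_pt_lim_square _ _ _ (nu_du u v Hr))).
  - cbv beta. ring.
Qed.

(** [gamma_2 = (ln |mu^2 - nu^2|)_u / (4 sqrt E)] forces [gamma_2] to be
    independent of [v]. *)
Lemma g2_v_indep : v_indep a b c d g2.
Proof.
  intros u v v' Hr Hr'.
  pose proof (v_indep_du _ _ _ _ _ _ _ _ _ _ norm_diff_v_indep Hr Hr'
                (norm_diff_du u v Hr) (norm_diff_du u v' Hr')) as E.
  pose proof (norm_diff_v_indep u v v' Hr Hr') as Hf. cbv beta in Hf.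
  rewrite <- (sqrtE_v_indep u v v' Hr Hr'), <- Hf in E.
  pose proof (sqrtE_pos u v Hr). pose proof (norm_diff_neq0 u v Hr).
  apply (Rmult_eq_reg_l (4 * A u v * (mu u v ^ 2 - nu u v ^ 2))); [lra |].
  apply Rmult_integral_contrapositive. split; [lra | assumption].
Qed.

(** With the Gauss equation this gives [v]-independence of [mu^2 + nu^2]. *)
Lemma norm_sum_v_indep : v_indep a b c d (fun u v => mu u v ^ 2 + nu u v ^ 2).
Proof.
  intros u v v' Hr Hr'.
  pose proof (v_indep_du _ _ _ _ _ _ _ _ _ _ g2_v_indep Hr Hr'
                (g2_du u v Hr) (g2_du u v' Hr')) as E.
  rewrite <- (sqrtE_v_indep u v v' Hr Hr'), <- (g2_v_indep u v v' Hr Hr') in E.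
  pose proof (sqrtE_pos u v Hr).
  assert (E' : g2 u v ^ 2 - mu u v ^ 2 - nu u v ^ 2 = g2 u v ^ 2 - mu u v' ^ 2 - nu u v' ^ 2)
    by (apply (Rmult_eq_reg_l (A u v)); lra).
  lra.
Qed.

(** [(mu^2 + nu^2)_v = -4 sqrt G mu nu beta_1] vanishes, and [mu nu <> 0]. *)
Lemma b1_zero u v : U u v -> b1 u v = 0.
Proof.
  intros Hr.
  pose proof (dv_zero_of_v_indep _ _ _ _ _ _ _ _ norm_sum_v_indep Hr
    (derivable_pt_lim_plus _ _ _ _ _ (derivable_pt_lim_square _ _ _ (mu_dv u v Hr))
       (derivable_pt_lim_square _ _ _ (nu_dv u v Hr)))) as E. cbv beta in E.
  pose proof (sqrtG_pos u v Hr). pose proof (mu_pos u v Hr). pose proof (nu_neq0 u v Hr).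
  apply (Rmult_eq_reg_l (-4 * B u v * mu u v * nu u v)); [lra |].
  repeat (apply Rmult_integral_contrapositive; split); (assumption || lra).
Qed.

Lemma mu_v_indep : v_indep a b c d mu.
Proof.
  apply v_indep_of_dv_zero. intros u v Hr.
  apply (derivable_pt_lim_value _ _ _ _ (mu_dv u v Hr)). rewrite (b1_zero u v Hr). ring.
Qed.

Lemma nu_v_indep : v_indep a b c d nu.
Proof.
  apply v_indep_of_dv_zero. intros u v Hr.
  apply (derivable_pt_lim_value _ _ _ _ (nu_dv u v Hr)). rewrite (b1_zero u v Hr). ring.
Qed.

Lemma sum_du u v : U u v ->
  derivable_pt_lim (fun s => mu s v + nu s v) u
    (A u v * (b2 u v + 2 * g2 u v) * (mu u v + nu u v)).
Proof.
  intros Hr. eapply derivable_pt_lim_value.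
  - exact (derivable_pt_lim_plus _ _ _ _ _ (mu_du u v Hr) (nu_du u v Hr)).
  - cbv beta. ring.
Qed.

Lemma diff_du u v : U u v ->
  derivable_pt_lim (fun s => mu s v - nu s v) u
    (A u v * (2 * g2 u v - b2 u v) * (mu u v - nu u v)).
Proof.
  intros Hr. eapply derivable_pt_lim_value.
  - exact (derivable_pt_lim_minus _ _ _ _ _ (mu_du u v Hr) (nu_du u v Hr)).
  - cbv beta. ring.
Qed.

(** [beta_2] is read off from [(ln |mu + nu|)_u], hence independent of [v]. *)
Lemma b2_v_indep : v_indep a b c d b2.
Proof.
  intros u v v' Hr Hr'.
  assert (Hsum : v_indep a b c d (fun u v => mu u v + nu u v)).
  { intros s t t' Ht Ht'. cbv beta. rewrite (mu_v_indep s t t' Ht Ht'), (nu_v_indep s t t' Ht Ht').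
    reflexivity. }
  pose proof (v_indep_du _ _ _ _ _ _ _ _ _ _ Hsum Hr Hr' (sum_du u v Hr) (sum_du u v' Hr')) as E.
  rewrite <- (sqrtE_v_indep u v v' Hr Hr'), <- (g2_v_indep u v v' Hr Hr'),
    <- (mu_v_indep u v v' Hr Hr'), <- (nu_v_indep u v v' Hr Hr') in E.
  pose proof (sqrtE_pos u v Hr). destruct (mu_plus_minus_nu_neq0 u v Hr) as [Hp _].
  assert (E' : A u v * (mu u v + nu u v) * b2 u v = A u v * (mu u v + nu u v) * b2 u v')
    by lra.
  apply (Rmult_eq_reg_l (A u v * (mu u v + nu u v))); [exact E' |].
  apply Rmult_integral_contrapositive. split; [lra | assumption].
Qed.

Lemma Ecoef_v_indep : v_indep a b c d (Ecoef zu).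
Proof.
  intros u v v' Hr Hr'. pose proof (sqrtE_v_indep u v v' Hr Hr') as H. unfold sqrtE in H.
  rewrite <- (sqrt_sqrt (Ecoef zu u v)), <- (sqrt_sqrt (Ecoef zu u v')), H; auto;
    apply Rlt_le, E_pos; assumption.
Qed.

Lemma g2_log_formula u v : U u v ->
  exists D, derivable_pt_lim (fun t => ln (Rabs (mu t v ^ 2 - nu t v ^ 2))) u D /\
    g2 u v = / (4 * sqrt (Ecoef zu u v)) * D.
Proof.
  intros Hr. pose proof (norm_diff_neq0 u v Hr). pose proof (sqrtE_pos u v Hr).
  eexists. split.
  - exact (derivable_pt_lim_ln_abs _ _ _ (norm_diff_du u v Hr) ltac:(assumption)).
  - change (sqrt (Ecoef zu u v)) with (A u v). cbv beta. field. split; (assumption || lra).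
Qed.

Lemma b2_log_formula u v : U u v ->
  exists D, derivable_pt_lim
              (fun t => ln (sqrt (Rabs ((mu t v + nu t v) / (mu t v - nu t v))))) u D /\
    b2 u v = / sqrt (Ecoef zu u v) * D.
Proof.
  intros Hr. destruct (mu_plus_minus_nu_neq0 u v Hr) as [Hp Hm].
  pose proof (sqrtE_pos u v Hr).
  eexists. split.
  - apply (derivable_pt_lim_locally (mult_real_fct (/ 2)
             (fun s => ln (Rabs (mu s v + nu s v)) - ln (Rabs (mu s v - nu s v))))).
    + apply derivable_pt_lim_scal, (derivable_pt_lim_minus (fun s => ln (Rabs (mu s v + nu s v)))
        (fun s => ln (Rabs (mu s v - nu s v)))).
      * exact (derivable_pt_lim_ln_abs _ _ _ (sum_du u v Hr) Hp).
      * exact (derivable_pt_lim_ln_abs _ _ _ (diff_du u v Hr) Hm).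
    + destruct (rect_nbhd_u _ _ _ _ _ _ Hr) as [r [Hr0 Hr1]]. exists r. split; auto.
      intros s Hs. destruct (mu_plus_minus_nu_neq0 s v (Hr1 s Hs)) as [Hps Hms].
      unfold mult_real_fct. rewrite ln_sqrt_abs_ratio; auto.
  - change (sqrt (Ecoef zu u v)) with (A u v). cbv beta. field.
    repeat split; (assumption || lra).
Qed.

End MinimalSurfaceWithGamma1Zero.

Theorem mainTheorem11 (a b c d : R) (z zu zv x y n1 n2 : R -> R -> V4)
  (nu mu g1 g2 b1 b2 : R -> R -> R) :
  a < b -> c < d ->
  semi_canonical (rect a b c d) z zu zv x y ->
  geometric_frame (rect a b c d) zu zv x y n1 n2 nu mu g1 g2 b1 b2 ->
  (forall u v, rect a b c d u v -> g1 u v = 0) ->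
  (forall u v v', rect a b c d u v -> rect a b c d u v' ->
     Ecoef zu u v = Ecoef zu u v' /\ mu u v = mu u v' /\ nu u v = nu u v' /\
     g2 u v = g2 u v' /\ b2 u v = b2 u v') /\
  (forall u v, rect a b c d u v -> b1 u v = 0) /\
  (forall u v, rect a b c d u v ->
     exists D, derivable_pt_lim
                 (fun t => ln (Rabs (mu t v ^ 2 - nu t v ^ 2))) u D /\
               g2 u v = / (4 * sqrt (Ecoef zu u v)) * D) /\
  (forall u v, rect a b c d u v ->
     exists D, derivable_pt_lim
                 (fun t => ln (sqrt (Rabs ((mu t v + nu t v) / (mu t v - nu t v))))) u D /\
               b2 u v = / sqrt (Ecoef zu u v) * D).
Proof.
  intros _ _ Hsc Hgf Hg1.
  split; [| split; [| split]].
  - intros u v v' Hr Hr'. repeat split;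
      [ eapply Ecoef_v_indep | eapply mu_v_indep | eapply nu_v_indep
      | eapply g2_v_indep | eapply b2_v_indep ]; eassumption.
  - intros u v Hr. eapply b1_zero; eassumption.
  - intros u v Hr. eapply g2_log_formula; eassumption.
  - intros u v Hr. eapply b2_log_formula; eassumption.
Qed.
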